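(* Let $(X,D)$ be a nef toric pair and $\mathsf d$ an effective curve class with $\mathsf d\cdot D_j>0$ for all $j$. Then the set $\mathrm T(\mathfrak p)^X_{\mathsf d}$ consists of exactly one tropical curve $\Gamma$, namely the translate of the union of the rays of the fan of $X$ to the fixed point, and $\mathrm{Mult}(\Gamma)=1$.
   Context: $X=\prod_{i=1}^{r_X}\mathbb{P}^{G_i}(\mathsf w^{(i)})$ is a product of fake weighted projective spaces with fan $\Sigma\subset N_{\mathbb R}$, $N\cong\mathbb Z^{n_X}$, $M=\mathrm{Hom}(N,\mathbb Z)$; its rays $[D_1],\dots,[D_{l_D}]$, $l_D=n_X+r_X$, correspond to the toric divisors and have primitive generators $\Delta(j)$. (A fake weighted projective space $\mathbb P^G(\mathsf w)$, $\mathsf w=(w_1,\dots,w_{n+1})$ coprime positive integers, is the toric variety of the complete simplicial fan with rays spanned by primitive $\Delta(1),\dots,\Delta(n+1)\in N\cong\mathbb Z^n$ with $\sum w_k\Delta(k)=0$, and $G=N/\langle\Delta(k)\rangle$; $\Sigma$ is the product fan.) A genus $0$ degree $\mathsf d$ maximally tangent marked tropical curve in $X$ is (an isomorphism class of) a pair $(\Gamma,h)$: $\Gamma$ is a finite tree with some univalent vertices removed (giving non-compact edges), with no univalent or bivalent vertices, a weight $w:\Gamma^{[1]}\to\mathbb Z_{\ge0}$ on edges, non-compact edges being markings: weight-$0$ ones are interior markings $P_1$ (and $P_2$), and there is exactly one positive-weight non-compact edge (exterior marking) for each $j=1,\dots,l_D$; $h:\Gamma\to N_{\mathbb R}$ is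 proper continuous, constant on an edge iff its weight is $0$, otherwise an embedding onto a segment of a rational-slope line; at each vertex $V$ the balancing condition $\sum_{E\ni V}w(E)u_{(V,E)}=0$ holds ($u_{(V,E)}$ the primitive integral vector pointing from $h(V)$ along $h(E)$); the exterior marking for $D_j$ is parallel to $[D_j]$ (pointing in direction $\Delta(j)$) with weight $\mathsf d\cdot D_j$. An interior marking satisfies a $\psi^k$-condition if the vertex it is attached to is incident to exactly $k+2$ edges of positive weight. $\mathrm T(\mathfrak p)^X_{\mathsf d}$ is the set of such curves with one interior marking, mapped to a fixed general point of $N_{\mathbb R}$ and satisfying a $\psi^{n_X+r_X-2}$-condition. Multiplicity: let $A=\mathbb Z[N]\otimes\Lambda^\bullet M$ (elements $z^n\alpha$, product $z^{n}\alpha\cdot z^{n'}\beta=z^{n+n'}\alpha\wedge\beta$), and $\ell_k(z^{n_1}\alpha_1\otimes\cdots\otimes z^{n_k}\alpha_k)=z^{n_1+\cdots+n_k}\iota_{n_1+\cdots+n_k}(\alpha_1\wedge\cdots\wedge\alpha_k)$, $\iota$ contraction. Choose a sink vertex $V_\infty$ and orient edges toward it. Set $\zeta_E=z^{w(E)\Delta(j)}$ for the exterior marking of $D_j$, $\zeta_P$ a generator of $\Lambda^{n_X}M$ for an interior marking, and for a vertex $V\ne V_\infty$ with incoming edges $E_1,\dots,E_k$ and outgoing $E_{out}$, $\zeta_{E_{out}}=\ell_k(\zeta_{E_1}\otimes\cdots\otimes\zeta_{E_k})$ (all up to sign). Then $\zeta_\Gamma=\prod_{E\ni V_\infty}\zeta_E\in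 z^0\otimes\Lambda^{n_X}M$ and $\mathrm{Mult}(\Gamma)$ is its index in $\Lambda^{n_X}M$. *)

From HB Require Import structures.
From mathcomp Require Import all_boot all_order all_algebra.
Set Implicit Arguments. Unset Strict Implicit. Unset Printing Implicit Defensive.
Import Order.TTheory GRing.Theory Num.Theory.
Local Open Scope ring_scope.

(* The lattice N = Z^n is 'rV[int]_n; M = Hom(N,Z) is identified with  *)
(* Z^n through the standard pairing.                                   *)

Definition primitive (n : nat) (v : 'rV[int]_n) : bool :=
  (\big[gcdn/0%N]_(k < n) absz (v 0 k) == 1%N).

(* X = prod_{i<r} P^{G_i}(w^(i)) : the l = n + r rays Delta j of the product
   fan.  Coordinates of N = Z^n are split into r blocks (cblock), rays are
   split into r blocks (rblock); the rays of block i live in the coordinate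
   sublattice of block i, there are (dim of block i) + 1 of them, they are
   primitive, span that sublattice rationally, and satisfy a relation
   sum_k w_k Delta(k) = 0 with coprime positive integer weights. *)
Definition is_fwps_product (n r : nat) (Delta : 'I_(n + r) -> 'rV[int]_n) : Prop :=
  (0 < r)%N /\ (forall j, primitive (Delta j)) /\
  exists (rblock : 'I_(n + r) -> 'I_r) (cblock : 'I_n -> 'I_r),
  forall i : 'I_r,
    #|[pred j | rblock j == i]| = (#|[pred k | cblock k == i]|).+1 /\
    (forall j k, rblock j == i -> cblock k != i -> Delta j 0 k = 0) /\
    (exists w : 'I_(n + r) -> nat,
        (forall j, rblock j == i -> (0 < w j)%N) /\
        \big[gcdn/0%N]_(j | rblock j == i) w j = 1%N /\
        \sum_(j | rblock j == i) (w j)%:Z *: Delta j = 0) /\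
    (forall y : 'rV[rat]_n,
        (forall j, rblock j == i -> \sum_(k < n) (Delta j 0 k)%:~R * y 0 k = 0) ->
        forall k, cblock k == i -> y 0 k = 0).

(* Marked tropical curves with one interior marking and one exterior   *)
(* marking per ray.  Vertices tV, compact edges tE (with an arbitrary  *)
(* reference orientation tsrc -> ttgt), weights, integral primitive    *)
(* direction tdir of each (positive weight) compact edge, positions    *)
(* of the vertices in N_R, the vertex carrying exterior marking j and  *)
(* its weight, and the vertex carrying the interior marking P_1.       *)
Record tcurve (R : realFieldType) (n l : nat) := TCurve {
  tV : finType;
  tE : finType;
  tsrc : tE -> tV;
  ttgt : tE -> tV;
  twt : tE -> nat;
  tdir : tE -> 'rV[int]_n;
  tpos : tV -> 'rV[R]_n;
  tlegv : 'I_l -> tV;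
  tlegw : 'I_l -> nat;
  tPv : tV }.

Arguments tV {R n l} _.
Arguments tE {R n l} _.
Arguments tsrc {R n l} _ _.
Arguments ttgt {R n l} _ _.
Arguments twt {R n l} _ _.
Arguments tdir {R n l} _ _.
Arguments tpos {R n l} _ _.
Arguments tlegv {R n l} _ _.
Arguments tlegw {R n l} _ _.
Arguments tPv {R n l} _.

Section Curves.
Variables (R : realFieldType) (n l : nat).
Implicit Types (C D : tcurve R n l).

Definition intR (v : 'rV[int]_n) : 'rV[R]_n := map_mx (fun x : int => x%:~R) v.

Definition tadj C : rel (tV C) := fun x y =>
  [exists e : tE C, ((tsrc C e == x) && (ttgt C e == y)) || ((tsrc C e == y) && (ttgt C e == x))].

Definition is_tree C : bool :=
  [forall x, forall y, connect (@tadj C) x y] && (#|tE C|.+1 == #|tV C|)%N.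

Definition tvalence C (v : tV C) : nat :=
  (#|[pred e | tsrc C e == v]| + #|[pred e | ttgt C e == v]|
   + #|[pred j | tlegv C j == v]| + (tPv C == v))%N.

Definition tposvalence C (v : tV C) : nat :=
  (#|[pred e | (0 < twt C e)%N && (tsrc C e == v)]|
   + #|[pred e | (0 < twt C e)%N && (ttgt C e == v)]|
   + #|[pred j | (0 < tlegw C j)%N && (tlegv C j == v)]|)%N.

Definition edge_geometry C : Prop :=
  forall e : tE C,
    if twt C e == 0%N then tpos C (tsrc C e) = tpos C (ttgt C e)
    else primitive (tdir C e) /\
         exists lam : R, 0 < lam /\
           tpos C (ttgt C e) - tpos C (tsrc C e) = lam *: intR (tdir C e).

(* balancing; exterior marking j points in direction Delta j *)
Definition balanced (Delta : 'I_l -> 'rV[int]_n) C : Prop :=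
  forall v : tV C,
    \sum_(e | tsrc C e == v) (twt C e)%:Z *: tdir C e
    - \sum_(e | ttgt C e == v) (twt C e)%:Z *: tdir C e
    + \sum_(j | tlegv C j == v) (tlegw C j)%:Z *: Delta j = 0.

(* membership in T(p)^X_d : genus 0, degree d (given by the intersection
   numbers c j = d . D_j), interior marking at p with a psi^{l-2} condition *)
Definition in_Tp (Delta : 'I_l -> 'rV[int]_n) (c : 'I_l -> nat) (p : 'rV[R]_n) C
  : Prop :=
  is_tree C /\
  (forall v : tV C, 3 <= tvalence v)%N /\
  edge_geometry C /\
  balanced Delta C /\
  (forall j, tlegw C j = c j) /\
  tpos C (tPv C) = p /\
  tposvalence (tPv C) = l.

Definition tcurve_iso C D : Prop :=
  exists (fV : tV C -> tV D) (fE : tE C -> tE D),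
    bijective fV /\ bijective fE /\
    (forall e, ((tsrc D (fE e) == fV (tsrc C e)) && (ttgt D (fE e) == fV (ttgt C e)))
            || ((tsrc D (fE e) == fV (ttgt C e)) && (ttgt D (fE e) == fV (tsrc C e)))) /\
    (forall e, twt D (fE e) = twt C e) /\
    (forall v, tpos D (fV v) = tpos C v) /\
    (forall j, tlegv D j = fV (tlegv C j)) /\
    (forall j, tlegw D j = tlegw C j) /\
    tPv D = fV (tPv C).

Definition star_curve (c : 'I_l -> nat) (p : 'rV[R]_n) : tcurve R n l :=
  @TCurve R n l unit void (fun e => match e with end) (fun e => match e with end)
    (fun e => match e with end) (fun e => match e with end)
    (fun _ => p) (fun _ => tt) c tt.

End Curves.

(* The algebra A = Z[N] (x) Lambda^. M.  Elements occurring in the     *)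
(* computation are monomials z^m alpha; alpha in Lambda^. M is stored  *)
(* by its coefficients on the basis e_S (S a subset of {0..n-1}, wedge *)
(* of the dual basis vectors in increasing order).                     *)
Section Ext.
Variable n : nat.

Definition extalg := {ffun {set 'I_n} -> int}.
Definition mono := ('rV[int]_n * extalg)%type.

Definition ext1 : extalg := [ffun S => (S == set0)%:R].
Definition extvol : extalg := [ffun S => (S == setT)%:R].

(* e_S /\ e_T = wsign S T e_(S u T) for disjoint S T *)
Definition wsign (S T : {set 'I_n}) : int :=
  (-1) ^+ #|[set ij : 'I_n * 'I_n | (ij.1 \in S) && (ij.2 \in T) && (ij.2 < ij.1)%N]|.

Definition wedge (a b : extalg) : extalg :=
  [ffun U : {set 'I_n} => \sum_(S : {set 'I_n}) \sum_(T : {set 'I_n} | [disjoint S & T] && (S :|: T == U))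
               wsign S T * a S * b T].

(* contraction iota_m, m in N *)
Definition contract (m : 'rV[int]_n) (a : extalg) : extalg :=
  [ffun U : {set 'I_n} => \sum_(i < n | i \notin U)
               (-1) ^+ #|[set k in U | (k < i)%N]| * m 0 i * a (i |: U)].

Definition mono_neg (x : mono) : mono := (x.1, [ffun S => - x.2 S]).

(* ell_k (z^{m1} a1 (x) ... (x) z^{mk} ak) *)
Definition ell (xs : seq mono) : mono :=
  let m := \sum_(x <- xs) x.1 in (m, contract m (foldr wedge ext1 [seq x.2 | x <- xs])).

Definition mono_prod (xs : seq mono) : mono :=
  (\sum_(x <- xs) x.1, foldr wedge ext1 [seq x.2 | x <- xs]).

End Ext.

Section Mult.
Variables (R : realFieldType) (n l : nat) (Delta : 'I_l -> 'rV[int]_n).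
Variable C : tcurve R n l.

(* o e = true : edge e oriented tsrc -> ttgt, otherwise ttgt -> tsrc *)
Definition in_edges (o : tE C -> bool) (v : tV C) : seq (tE C) :=
  [seq e <- enum (tE C) | if o e then ttgt C e == v else tsrc C e == v].
Definition out_edges (o : tE C -> bool) (v : tV C) : seq (tE C) :=
  [seq e <- enum (tE C) | if o e then tsrc C e == v else ttgt C e == v].

Definition leg_mono (j : 'I_l) : mono n := ((tlegw C j)%:Z *: Delta j, ext1 n).

(* zeta of all edges coming into v (compact, exterior, interior markings);
   zeta_P is the generator e_{0..n-1} of Lambda^n M *)
Definition inputs (o : tE C -> bool) (zeta : tE C -> mono n) (v : tV C) : seq (mono n) :=
  [seq zeta e | e <- in_edges o v] ++ [seq leg_mono j | j <- enum 'I_l & tlegv C j == v]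
  ++ (if tPv C == v then [:: (0, extvol n)] else [::]).

(* a valid computation of zeta_Gamma with sink s: edges oriented towards s,
   zeta of each outgoing edge = +- ell_k of the incoming ones *)
Definition valid_zeta (s : tV C) (o : tE C -> bool) (zeta : tE C -> mono n) : Prop :=
  out_edges o s = [::] /\
  forall v, v != s -> exists e, out_edges o v = [:: e] /\
     (zeta e = ell (inputs o zeta v) \/ zeta e = mono_neg (ell (inputs o zeta v))).

(* index of zeta_Gamma = (coefficient) e_{0..n-1} in Lambda^n M *)
Definition zeta_index (s : tV C) (o : tE C -> bool) (zeta : tE C -> mono n) : nat :=
  absz ((mono_prod (inputs o zeta s)).2 setT).

(* Mult(Gamma) = k : well defined (all valid computations give k) and some
   valid computation exists *)
Definition Mult_eq (k : nat) : Prop :=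
  (exists s o zeta, valid_zeta s o zeta /\ zeta_index s o zeta = k) /\
  (forall s o zeta, valid_zeta s o zeta -> zeta_index s o zeta = k).

End Mult.

From HB Require Import structures.
From mathcomp Require Import all_boot all_order all_algebra.
From mathcomp Require Import zify.
Set Implicit Arguments. Unset Strict Implicit. Unset Printing Implicit Defensive.
Import Order.TTheory GRing.Theory Num.Theory.
Local Open Scope ring_scope.

(* The proof has three independent parts.
   - Existence: the star curve is balanced because sum_j (d.D_j) Delta j = 0,
     and its vertex has valence l + 1 >= 3 since a product of fake weighted
     projective spaces has n >= 1 and r >= 1 (so l = n + r >= 2).
   - Uniqueness: a degree count.  Summing the valences of a tree gives
     2|E| + l (handshake lemma); the psi^{l-2} condition forces valence >= l
     at the marked vertex and stability forces >= 3 elsewhere, so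
     l + 3(|V| - 1) <= 2(|V| - 1) + l, i.e. the tree is a single vertex.
     An edgeless curve with one vertex and the right legs is the star.
   - Multiplicity: the star has no compact edges, so zeta_Gamma is the
     product of the leg monomials (exterior part 1) and zeta_P = e_{0..n-1};
     as 1 is a unit for the wedge product, its index is 1. *)

Lemma disjoint_set0 (T : finType) (A : {set T}) : [disjoint A & set0].
Proof. by rewrite -setI_eq0 setI0. Qed.

Section ExteriorUnit.
Variable n : nat.

Lemma wsign0S (T : {set 'I_n}) : wsign set0 T = 1.
Proof.
rewrite /wsign (_ : [set ij | _] = set0) ?cards0 //.
by apply/setP => ij; rewrite !inE.
Qed.

Lemma wsignS0 (S : {set 'I_n}) : wsign S set0 = 1.
Proof.
rewrite /wsign (_ : [set ij | _] = set0) ?cards0 //.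
by apply/setP => ij; rewrite !inE andbF.
Qed.

Lemma wedge1a (a : extalg n) : wedge (ext1 n) a = a.
Proof.
apply/ffunP => U; rewrite ffunE (bigD1 set0) //= [X in _ + X]big1; last first.
  move=> S nzS; apply: big1 => T _.
  by rewrite ffunE (negbTE nzS) mulr0 mul0r.
rewrite addr0 (big_pred1 U); last first.
  by move=> T /=; rewrite disjoint_sym disjoint_set0 set0U.
by rewrite wsign0S ffunE eqxx !mul1r.
Qed.

Lemma wedgea1 (a : extalg n) : wedge a (ext1 n) = a.
Proof.
apply/ffunP => U; rewrite ffunE.
under eq_bigr => S _.
  rewrite big_mkcond (bigD1 set0) //= [X in _ + X]big1; last first.
    by move=> T nzT; rewrite ffunE (negbTE nzT) mulr0 if_same.
  rewrite addr0 disjoint_set0 setU0 ffunE eqxx mulr1 wsignS0 mul1r.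
  over.
rewrite (bigD1 U) //= eqxx big1 ?addr0 // => S /negbTE neSU.
by rewrite neSU.
Qed.

Lemma foldr_wedge_units (s : seq (extalg n)) (a : extalg n) :
  all (pred1 (ext1 n)) s -> foldr (@wedge n) (ext1 n) (s ++ [:: a]) = a.
Proof.
elim: s => [|b s IH] /=; first by rewrite wedgea1.
by case/andP => /eqP -> /IH ->; rewrite wedge1a.
Qed.

End ExteriorUnit.

(* There is at least one factor and the lattice is nonzero, because the
   rays are primitive vectors (there are none in Z^0). *)
Lemma fwps_product_dims (n r : nat) (Delta : 'I_(n + r) -> 'rV[int]_n) :
  is_fwps_product Delta -> (0 < n)%N /\ (0 < r)%N.
Proof.
case=> r_gt0 [prim _]; split=> //.
have j0 : 'I_(n + r) by exists n; rewrite -{1}(addn0 n) ltn_add2l.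
move: (prim j0); rewrite /primitive.
by case: n Delta j0 prim => // Delta j0 _; rewrite big_ord0.
Qed.

Lemma sum_card_fibres (A B : finType) (f : A -> B) :
  (\sum_(b : B) #|[pred a | f a == b]| = #|A|)%N.
Proof.
rewrite -sum1_card; under eq_bigr do rewrite -sum1_card.
rewrite (exchange_big_dep predT) //=; apply: eq_bigr => a _.
by rewrite (big_pred1 (f a)) // => b /=; rewrite eq_sym.
Qed.

Section DegreeCount.
Variables (R : realFieldType) (n l : nat) (C : tcurve R n l).

Definition tdegree (v : tV C) : nat :=
  (#|[pred e | tsrc C e == v]| + #|[pred e | ttgt C e == v]|
   + #|[pred j | tlegv C j == v]|)%N.

(* Handshake lemma: every compact edge has two ends, every leg one. *)
Lemma sum_tdegree : (\sum_v tdegree v = #|tE C| + #|tE C| + l)%N.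
Proof. by rewrite !big_split /= !sum_card_fibres card_ord. Qed.

Lemma tposvalence_le_tdegree (v : tV C) : (tposvalence v <= tdegree v)%N.
Proof.
rewrite /tposvalence /tdegree.
by rewrite !leq_add // subset_leq_card //; apply/subsetP => x; rewrite !inE => /andP[].
Qed.

(* A tree whose marked vertex carries l positive-weight edges and whose
   other vertices are at least trivalent has no compact edge: otherwise
   l + 3(|V| - 1) <= 2|E| + l = 2(|V| - 1) + l. *)
Lemma tree_marked_star :
  is_tree C -> (forall v : tV C, 3 <= tvalence v)%N -> tposvalence (tPv C) = l ->
  (#|tV C| <= 1)%N /\ #|tE C| = 0%N.
Proof.
move=> /andP[_ /eqP nV] val posv.
have degP : (l <= tdegree (tPv C))%N by rewrite -[X in (X <= _)%N]posv tposvalence_le_tdegree.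
have deg3 v : v != tPv C -> (3 <= tdegree v)%N.
  by move=> nvP; move: (val v); rewrite /tvalence eq_sym (negbTE nvP) addn0.
have degV : (3 * #|tV C|.-1 <= \sum_(v | v != tPv C) tdegree v)%N.
  apply: leq_trans _ (@leq_sum _ _ (fun v => v != tPv C) (fun=> 3%N) _ deg3); rewrite sum_nat_const mulnC leq_mul //.
  by rewrite -(cardC1 (tPv C)) subset_leq_card //; apply/subsetP => v; rewrite !inE.
have := sum_tdegree; rewrite (bigD1 (tPv C)) //= => sum_deg.
have := leq_add degP degV; rewrite sum_deg -nV /=.
by split; lia.
Qed.

End DegreeCount.

Section Star.
Variables (R : realFieldType) (n l : nat) (Delta : 'I_l -> 'rV[int]_n).
Variables (c : 'I_l -> nat) (p : 'rV[R]_n).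

Lemma star_in_Tp :
  (2 <= l)%N -> (forall j, (0 < c j)%N) ->
  \sum_(j < l) (c j)%:Z *: Delta j = 0 ->
  in_Tp Delta c p (star_curve c p).
Proof.
move=> l_ge2 c_gt0 bal; split; [|split; [|split; [|split; [|split; [|split]]]]] => //.
- apply/andP; split; last by rewrite card_void card_unit.
  by apply/forallP => -[]; apply/forallP => -[]; exact: connect0.
- by case; rewrite /tvalence /= (@eq_card _ _ predT) // card_ord; lia.
- have sum_void (F : void -> 'rV[int]_n) (P : pred void) : \sum_(e | P e) F e = 0.
    by rewrite big_pred0 // => -[].
  by case; rewrite /= !sum_void subrr add0r (eq_bigl xpredT).
- rewrite /tposvalence /= !(@eq_card void _ pred0) ?card0 //= (@eq_card _ _ predT) ?card_ord //.
  by move=> j; rewrite !inE /= c_gt0.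
Qed.

Lemma edgeless_iso_star (C : tcurve R n l) :
  #|tE C| = 0%N -> (#|tV C| <= 1)%N ->
  (forall j, tlegw C j = c j) -> tpos C (tPv C) = p ->
  tcurve_iso C (star_curve c p).
Proof.
move=> /card0_eq noE /card_le1P oneV legw posP.
have noE' (e : tE C) : False by have := noE e; rewrite inE.
have allV (v : tV C) : v = tPv C by have := oneV v isT (tPv C); rewrite !inE => /esym/eqP.
exists (fun _ => tt), (fun e => match noE' e with end).
split; first by exists (fun _ => tPv C) => [v|[]] //; rewrite -allV.
split; first by exists (fun v : void => match v with end) => [e|[]]; case: (noE' e).
split; first by move=> e; case: (noE' e).
split; first by move=> e; case: (noE' e).
split; first by move=> v /=; rewrite (allV v) posP.
split; first by move=> j; case: (tlegv _ _).
by split.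
Qed.

(* Every computation of zeta_Gamma on the star has index 1: the sink is
   the only vertex, the leg monomials have exterior part 1, and the
   interior marking contributes the volume form e_{0..n-1}. *)
Lemma star_zeta_index (s : tV (star_curve c p)) (o : tE (star_curve c p) -> bool)
    (zeta : tE (star_curve c p) -> mono n) :
  zeta_index Delta (C := star_curve c p) s o zeta = 1%N.
Proof.
case: s in o zeta *; rewrite /zeta_index /inputs.
have -> : in_edges o tt = [::] by case: (in_edges _ _) => // -[].
rewrite /= eqxx /mono_prod /= map_cat /= foldr_wedge_units ?ffunE ?eqxx //.
by apply/allP => _ /mapP[_ /mapP[j _ ->] ->] /=.
Qed.

Lemma star_mult : Mult_eq Delta (star_curve c p) 1.
Proof.
split; last by move=> s o zeta _; exact: star_zeta_index.
exists tt, (fun e : void => match e with end), (fun e : void => match e with end).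
split; last exact: star_zeta_index.
by split=> [|[]]; case: (out_edges _ _) => // -[].
Qed.

End Star.

Theorem proposition5p1 (n r : nat) (Delta : 'I_(n + r) -> 'rV[int]_n)
    (c : 'I_(n + r) -> nat) (R : realFieldType) (p : 'rV[R]_n) :
  is_fwps_product Delta ->
  (forall j, (0 < c j)%N) ->
  \sum_(j < n + r) (c j)%:Z *: Delta j = 0 ->
  in_Tp Delta c p (star_curve c p) /\
  (forall C : tcurve R n (n + r), in_Tp Delta c p C -> tcurve_iso C (star_curve c p)) /\
  Mult_eq Delta (star_curve c p) 1.
Proof.
move=> X c_gt0 bal; have [n_gt0 r_gt0] := fwps_product_dims X.
split; first by apply: star_in_Tp => //; rewrite -[2%N]/(1 + 1)%N leq_add.
split; last exact: star_mult.
move=> C [tree [val [_ [_ [legw [posP posv]]]]]].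
have [oneV noE] := tree_marked_star tree val posv.
exact: edgeless_iso_star.
Qed.
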